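(* Let $n\ge 3$ and let $K_{n+1}=(V,E)$ be the complete graph on $V=\{0,\dots,n\}$. Then $\dim P^3_{[0,n]}(K_{n+1})=|E|-n-2$.
   Context: For an undirected graph $G=(V,E)$ with $V=\{0,\dots,n\}$, a $[0,n]$-$p$-path is a simple (undirected) path from $0$ to $n$ with exactly $p$ edges, and $P^p_{[0,n]}(G)\subseteq\mathbb{R}^E$ is the convex hull of the incidence vectors of all $[0,n]$-$p$-paths in $G$. *)

From HB Require Import structures.
From mathcomp Require Import all_boot all_order all_algebra.
Set Implicit Arguments. Unset Strict Implicit. Unset Printing Implicit Defensive.
Import Order.TTheory GRing.Theory Num.Theory.
Local Open Scope ring_scope.

(* Vertices of a graph on V = {0,...,n} are 'I_n.+1; vertex 0 is ord0,
   vertex n is ord_max. An (undirected) edge is a 2-element vertex set. *)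
Definition edge (n : nat) := {e : {set 'I_n.+1} | #|e| == 2%N}.

Definition complete_graph (n : nat) : {set edge n} := [set: edge n].

Definition is_p_path (n p : nat) (G : {set edge n}) (s : seq 'I_n.+1) : Prop :=
  [/\ size s = p.+1, uniq s, head ord0 s = ord0, last ord0 s = ord_max &
      forall i, (i < p)%N ->
        exists2 e : edge n, e \in G & val e = [set nth ord0 s i; nth ord0 s i.+1]].

Definition path_edges (n : nat) (s : seq 'I_n.+1) : {set edge n} :=
  [set e : edge n | [exists i : 'I_(size s).-1,
                      val e == [set nth ord0 s i; nth ord0 s i.+1]]].

Definition incvec (R : realFieldType) (n : nat) (S : {set edge n})
  : {ffun edge n -> R^o} := [ffun e => if e \in S then 1 else 0].

Definition conv_hull (R : realFieldType) (V : lmodType R) (X : V -> Prop) : V -> Prop :=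
  fun x => exists k (y : 'I_k -> V) (w : 'I_k -> R),
    [/\ forall i, X (y i), forall i, 0 <= w i, \sum_i w i = 1 &
        x = \sum_i w i *: y i].

Definition path_polytope (R : realFieldType) (n p : nat) (G : {set edge n})
  : {ffun edge n -> R^o} -> Prop :=
  conv_hull (fun x => exists s, is_p_path p G s /\ x = incvec R (path_edges s)).

Definition aff_indep (R : realFieldType) (V : lmodType R) (k : nat) (y : 'I_k -> V) : Prop :=
  forall c : 'I_k -> R, \sum_i c i = 0 -> \sum_i c i *: y i = 0 -> forall i, c i = 0.

Definition has_dim (R : realFieldType) (V : lmodType R) (X : V -> Prop) (d : nat) : Prop :=
  (exists y : 'I_d.+1 -> V, (forall i, X (y i)) /\ aff_indep y) /\
  (forall k (y : 'I_k -> V), (forall i, X (y i)) -> aff_indep y -> (k <= d.+1)%N).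

From mathcomp Require Import all_boot all_order all_algebra zify.
Set Implicit Arguments. Unset Strict Implicit. Unset Printing Implicit Defensive.
Import Order.TTheory GRing.Theory Num.Theory.
Local Open Scope ring_scope.

(* The incidence vector x of a 3-edge path 0-a-b-n (a, b inner vertices) satisfies
   n + 2 linear equations: x({0,n}) = 0, the degree of 0 is 1, exactly one edge avoids
   {0,n}, and at every inner vertex v the edges from v to {0,n} carry the same weight as
   the other edges at v.  These equations determine x from its coordinates on the set F
   of edges avoiding n, {0,1} and {1,2}, so at most |F| + 1 = |E| - n - 1 path vectors
   are affinely independent.  Conversely, the path 0-1-2-n together with one path through
   each f in F (0-f-1-n if 0 is in f, otherwise 0-f-n, entering f at 1 when 1 is in f) is
   affinely independent: restricted to F the matrix of these vectors is unitriangular once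
   F is ordered as edges avoiding {0,1}, then edges at 0, then the other edges at 1. *)

Section AffineIndependence.

Variable R : realFieldType.

Lemma mulmx_inj_leq (k m : nat) (A : 'M[R]_(k, m)) :
  (forall u : 'rV_k, u *m A = 0 -> u = 0) -> (k <= m)%N.
Proof.
move=> Ainj; have /eqP <- : row_free A; last exact: rank_leq_col.
rewrite -kermx_eq0; apply/eqP/row_matrixP => i; rewrite row0.
by apply: Ainj; rewrite -row_mul mulmx_ker row0.
Qed.

Lemma aff_indep_leq (T : finType) (F : {set T}) (k : nat) (y : 'I_k -> {ffun T -> R^o}) :
  (forall c : 'I_k -> R, \sum_i c i = 0 ->
     {in F, forall t, (\sum_i c i *: y i) t = 0} -> \sum_i c i *: y i = 0) ->
  aff_indep y -> (k <= #|F|.+1)%N.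
Proof.
move=> detF yind.
pose A := row_mx (const_mx 1 : 'cV[R]_k) (\matrix_(i < k, j < #|F|) y i (enum_val j)).
apply: (@mulmx_inj_leq _ _ A) => u /eqP.
rewrite mul_mx_row row_mx_eq0 => /andP[/eqP sum0 /eqP coord0].
have sum_u : \sum_j u 0 j = 0.
  move: sum0 => /(congr1 (fun B : 'M_1 => B 0 0)); rewrite !mxE.
  by under eq_bigr => j _ do rewrite mxE mulr1.
apply/rowP => i; rewrite mxE; apply: (yind (fun j => u 0 j)) => //.
apply: detF => // t Ft.
move: coord0 => /(congr1 (fun B : 'M_(1, #|F|) => B 0 (enum_rank_in Ft t))).
rewrite !mxE sum_ffunE => coord_t; rewrite -[RHS]coord_t; apply: eq_bigr => j _.
by rewrite ffunE mxE enum_rankK_in.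
Qed.

Lemma unitriangular_coef_eq0 (I : finType) (c : I -> R) (Q : I -> I -> R) (rk : I -> nat) :
  (forall g, \sum_f c f * Q f g = 0) -> (forall f, Q f f != 0) ->
  (forall f g, f != g -> Q f g != 0 -> (rk f < rk g)%N) ->
  forall f, c f = 0.
Proof.
move=> coord0 diag tri g; have [m] := ubnP (rk g); elim: m g => // m IHm g /ltnSE rk_g.
have := coord0 g; rewrite (bigD1 g) //= big1 ?addr0 => [/eqP|f fg].
  by rewrite mulf_eq0 (negbTE (diag g)) orbF => /eqP.
have [->|Qfg] := eqVneq (Q f g) 0; first by rewrite mulr0.
by rewrite IHm ?mul0r // (leq_trans (tri f g fg Qfg)).
Qed.

Definition pts_cons (V : Type) (k : nat) (y0 : V) (y : 'I_k -> V) (i : 'I_k.+1) : V :=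
  if unlift ord0 i is Some j then y j else y0.

Lemma aff_indep_unitriangular (T : finType) (F : {set T}) (y0 : {ffun T -> R^o})
    (y : T -> {ffun T -> R^o}) (rk : T -> nat) :
  {in F, forall t, y0 t = 0} -> {in F, forall f, y f f != 0} ->
  {in F &, forall f g, f != g -> y f g != 0 -> (rk f < rk g)%N} ->
  aff_indep (pts_cons y0 (fun j : 'I_#|F| => y (enum_val j))).
Proof.
move=> y0F diag tri c sum0 comb0.
have c_lift : forall j, c (lift ord0 j) = 0.
  apply: (@unitriangular_coef_eq0 _ _ (fun j j' => y (enum_val j) (enum_val j'))
                                  (fun j => rk (enum_val j))) => [j'|j|j j' jj'].
  - have := congr1 (fun x : {ffun T -> R^o} => x (enum_val j')) comb0.
    rewrite sum_ffunE big_ord_recl !ffunE /pts_cons unlift_none y0F ?enum_valP //.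
    rewrite scaler0 add0r => comb_j; rewrite -[RHS]comb_j.
    by apply: eq_bigr => i _; rewrite ffunE liftK.
  - exact/diag/enum_valP.
  - by apply: tri; rewrite ?enum_valP ?(inj_eq enum_val_inj).
have c0 : c ord0 = 0.
  by move: sum0; rewrite big_ord_recl big1 ?addr0 // => i _; exact: c_lift.
by move=> i; case: (unliftP ord0 i) => [j ->|->].
Qed.

End AffineIndependence.

Lemma neq_set_mem (T : finType) (A B : {set T}) x :
  x \in A -> x \notin B -> (A == B) = false.
Proof. by move=> xA; apply: contraNF => /eqP <-. Qed.

Section Edges.

Variable n : nat.
Implicit Types (e f : edge n) (S : {set 'I_n.+1}) (x y : 'I_n.+1).

Lemma edge_card e : #|val e| = 2%N.
Proof. exact: eqP (valP e). Qed.

Lemma card_set2 x y : x != y -> #|[set x; y]| == 2%N.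
Proof. by rewrite cards2 => ->. Qed.

Definition edge_of x y (xy : x != y) : edge n := exist (fun S => #|S| == 2%N) _ (card_set2 xy).

Lemma card2_set2 S x y : #|S| = 2%N -> x != y -> x \in S -> y \in S -> S = [set x; y].
Proof.
move=> S2 xy xS yS; apply/eqP; rewrite eq_sym eqEcard subUset !sub1set xS yS.
by rewrite cards2 xy S2.
Qed.

Lemma edgeE e x y : x != y -> x \in val e -> y \in val e -> val e = [set x; y].
Proof. exact/card2_set2/edge_card. Qed.

Lemma edge_eq e f x y :
  x != y -> x \in val e -> y \in val e -> x \in val f -> y \in val f -> e = f.
Proof. by move=> xy xe ye xf yf; apply: val_inj; rewrite (edgeE xy xe ye) (edgeE xy xf yf). Qed.

Lemma edge_other e x : x \in val e -> exists2 y, x != y & val e = [set x; y].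
Proof.
have /cards2P[u [v [uv ->]]] : #|val e| == 2%N by rewrite edge_card.
by rewrite in_set2 => /orP[]/eqP->; [exists v | exists u; rewrite 1?setUC 1?eq_sym].
Qed.

Lemma card_edges_at_max : #|[set e : edge n | ord_max \in val e]| = n.
Proof.
have neq_max (i : 'I_n) : widen_ord (leqnSn n) i != ord_max.
  by rewrite -(inj_eq val_inj) /= neq_ltn ltn_ord.
pose e_at i := edge_of (neq_max i).
have e_at_inj : injective e_at.
  move=> i j /(congr1 val) /= ij; apply: val_inj.
  have : widen_ord (leqnSn n) i \in [set widen_ord (leqnSn n) j; ord_max] by rewrite -ij set21.
  by rewrite in_set2 (negbTE (neq_max i)) orbF => /eqP/(congr1 val).
rewrite -[RHS]card_ord -(card_imset _ e_at_inj); apply: eq_card => e.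
rewrite inE; apply/idP/imsetP => [en|[i _ ->]]; last by rewrite /= set22.
have [v nv eE] := edge_other en.
have vn : (v < n)%N.
  by rewrite ltn_neqAle -ltnS ltn_ord andbT; move: nv; rewrite eq_sym -(inj_eq val_inj).
exists (Ordinal vn) => //; apply: val_inj; rewrite eE setUC /=.
by congr [set _; _]; apply: val_inj.
Qed.

End Edges.

Section Pairing.

Variables (R : realFieldType) (n : nat).
Implicit Types (w : {set 'I_n.+1} -> R) (x : {ffun edge n -> R^o}) (S : {set 'I_n.+1}).

Definition pairing w x : R := \sum_e w (val e) * x e.

Lemma pairing_sum w k (c : 'I_k -> R) (y : 'I_k -> {ffun edge n -> R^o}) :
  pairing w (\sum_i c i *: y i) = \sum_i c i * pairing w (y i).
Proof.
rewrite /pairing; under eq_bigr => e _ do rewrite sum_ffunE mulr_sumr.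
rewrite exchange_big; apply: eq_bigr => i _; rewrite mulr_sumr.
by apply: eq_bigr => e _; rewrite ffunE mulrCA.
Qed.

Lemma pairing_conv_hull w (X : {ffun edge n -> R^o} -> Prop) kappa x :
  (forall y, X y -> pairing w y = kappa) -> conv_hull X x -> pairing w x = kappa.
Proof.
move=> wX [k [y [c [Xy _ sum1 ->]]]]; rewrite pairing_sum.
by under eq_bigr => i _ do rewrite wX //; rewrite -mulr_suml sum1 mul1r.
Qed.

Lemma pairing_aff_comb w kappa k (c : 'I_k -> R) (y : 'I_k -> {ffun edge n -> R^o}) :
  (forall i, pairing w (y i) = kappa) -> \sum_i c i = 0 ->
  pairing w (\sum_i c i *: y i) = 0.
Proof.
move=> wy sum0; rewrite pairing_sum.
by under eq_bigr => i _ do rewrite wy; rewrite -mulr_suml sum0 mul0r.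
Qed.

Lemma pairing_eq0_coord w x e :
  pairing w x = 0 -> (forall f, f != e -> w (val f) * x f = 0) -> w (val e) != 0 ->
  x e = 0.
Proof.
move=> wx0 others we; move: wx0; rewrite /pairing (bigD1 e) //= big1 ?addr0 => [/eqP|f /others //].
by rewrite mulf_eq0 (negbTE we) => /eqP.
Qed.

Lemma sum_edge_indicator w S :
  #|S| = 2%N -> \sum_(e : edge n) w (val e) * (val e == S)%:R = w S.
Proof.
move=> S2; have S2' : #|S| == 2%N by rewrite S2.
rewrite (bigD1 (exist (fun S => #|S| == 2%N) S S2')) //= eqxx mulr1 big1 ?addr0 // => e eS.
by case: eqP => [eS'|_]; [case/eqP: eS; apply: val_inj | rewrite mulr0].
Qed.

End Pairing.

Section ThreeEdgePaths.

Variables (R : realFieldType) (n : nat).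
Hypothesis n_gt0 : (0 < n)%N.
Implicit Types (a b v : 'I_n.+1) (w : {set 'I_n.+1} -> R) (S : {set 'I_n.+1}).

Lemma ord0_neq_max : (ord0 : 'I_n.+1) != ord_max.
Proof. by rewrite -(inj_eq val_inj) /= eq_sym -lt0n. Qed.

Definition inner_pair a b :=
  [&& a != ord0, a != ord_max, b != ord0, b != ord_max & a != b].

Lemma p_path3E (G : {set edge n}) s :
  is_p_path 3 G s -> exists a b, s = [:: ord0; a; b; ord_max] /\ inner_pair a b.
Proof.
case=> + + + + _; case: s => [|x0 [|a [|b [|x3 [|? ?]]]]] //= _.
rewrite !inE !negb_or -!andbA => /and5P[x0a x0b _ ab /andP[a3 b3]] x0E x3E.
subst x0 x3; exists a, b; split=> //.
by rewrite andbT in b3; apply/and5P; split; rewrite // eq_sym.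
Qed.

Lemma mem_path_edges4 (x0 x1 x2 x3 : 'I_n.+1) (e : edge n) :
  (e \in path_edges [:: x0; x1; x2; x3]) =
  [|| val e == [set x0; x1], val e == [set x1; x2] | val e == [set x2; x3]].
Proof.
rewrite inE; apply/existsP/idP => [[[[|[|[|i]]] ?]] //= ->|]; rewrite ?orbT //.
by case/or3P=> ?; [exists ord0 | exists (inord 1) | exists ord_max]; rewrite ?inordK.
Qed.

Definition pv a b : {ffun edge n -> R^o} :=
  incvec R (path_edges [:: ord0; a; b; ord_max]).

Lemma pv_neq0 a b (e : edge n) :
  (pv a b e != 0) = [|| val e == [set ord0; a], val e == [set a; b] | val e == [set b; ord_max]].
Proof. by rewrite ffunE mem_path_edges4; case: ifP; rewrite ?oner_eq0 ?eqxx. Qed.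

Lemma p_path3_inner a b :
  inner_pair a b -> is_p_path 3 (complete_graph n) [:: ord0; a; b; ord_max].
Proof.
case/and5P=> a0 an b0 bn ab; split=> //.
  by rewrite /= !inE !negb_or !(eq_sym ord0) a0 b0 (eq_sym ord_max) ord0_neq_max ab an bn.
have edgeK x y : x != y -> exists2 e : edge n, e \in complete_graph n & val e = [set x; y].
  by move=> xy; exists (edge_of xy); rewrite ?inE.
by case=> [|[|[|i]]] // _; apply: edgeK; rewrite // eq_sym.
Qed.

Lemma pv_in_polytope a b :
  inner_pair a b -> @path_polytope R n 3 (complete_graph n) (pv a b).
Proof.
move=> ab; exists 1%N, (fun=> pv a b), (fun=> 1); split.
- by move=> _; exists [:: ord0; a; b; ord_max]; split=> //; exact: p_path3_inner.
- by [].
- by rewrite big_ord1.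
- by rewrite big_ord1 scale1r.
Qed.

Definition path_sum w a b := w [set ord0; a] + w [set a; b] + w [set b; ord_max].

Lemma pvE a b (e : edge n) : inner_pair a b ->
  pv a b e = (val e == [set ord0; a])%:R + (val e == [set a; b])%:R +
             (val e == [set b; ord_max])%:R.
Proof.
case/and5P=> a0 an b0 _ ab; rewrite ffunE mem_path_edges4.
have a_bn : a \notin [set b; ord_max] by rewrite in_set2 negb_or ab.
have [o_ab o_bn] : ord0 \notin [set a; b] /\ ord0 \notin [set b; ord_max].
  by rewrite !in_set2 !negb_or !(eq_sym ord0) a0 b0 (eq_sym ord_max) ord0_neq_max.
have [->|_] := eqVneq (val e) [set ord0; a].
  by rewrite !(neq_set_mem (set21 _ _)) //= !addr0.
have [->|_] := eqVneq (val e) [set a; b].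
  by rewrite (neq_set_mem (set21 _ _)) // addr0 add0r.
by case: eqP; rewrite !add0r.
Qed.

Lemma pairing_pv w a b : inner_pair a b -> pairing w (pv a b) = path_sum w a b.
Proof.
move=> ab; have /and5P[a0 _ _ bn a_b] := ab; rewrite /pairing.
under eq_bigr => e _ do rewrite pvE // !mulrDr.
by rewrite !big_split /= !sum_edge_indicator //; apply/eqP/card_set2; rewrite // eq_sym.
Qed.

Lemma pairing_polytope w kappa x :
  (forall a b, inner_pair a b -> path_sum w a b = kappa) ->
  @path_polytope R n 3 (complete_graph n) x -> pairing w x = kappa.
Proof.
move=> wpath; apply: pairing_conv_hull => _ [s [/p_path3E[a [b [-> ab]]] ->]].
by rewrite -(wpath a b ab) -pairing_pv.
Qed.

Definition w_0n S : R := ((ord0 \in S) && (ord_max \in S))%:R.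
Definition w_at0 S : R := (ord0 \in S)%:R.
Definition w_mid S : R := ((ord0 \notin S) && (ord_max \notin S))%:R.
Definition w_flow v S : R :=
  if v \in S then (if (ord0 \in S) || (ord_max \in S) then 1 else -1) else 0.

Section PathSums.

Variables a b : 'I_n.+1.
Hypothesis ab : inner_pair a b.

Let h0a : (ord0 == a) = false. Proof. by case/and5P: ab; rewrite eq_sym => /negbTE. Qed.
Let hna : (ord_max == a) = false. Proof. by case/and5P: ab => _; rewrite eq_sym => /negbTE. Qed.
Let h0b : (ord0 == b) = false. Proof. by case/and5P: ab => _ _; rewrite eq_sym => /negbTE. Qed.
Let hnb : (ord_max == b) = false. Proof. by case/and5P: ab => _ _ _; rewrite eq_sym => /negbTE. Qed.
Let h0n : (ord0 == ord_max :> 'I_n.+1) = false. Proof. exact/negbTE/ord0_neq_max. Qed.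
Let hn0 : (ord_max == ord0 :> 'I_n.+1) = false. Proof. by rewrite eq_sym h0n. Qed.

Lemma path_sum_w_0n : path_sum w_0n a b = 0.
Proof. by rewrite /path_sum /w_0n !in_set2 !eqxx h0a hna h0b hnb h0n hn0 /= !addr0. Qed.

Lemma path_sum_w_at0 : path_sum w_at0 a b = 1.
Proof. by rewrite /path_sum /w_at0 !in_set2 !eqxx h0a h0b h0n /= !addr0. Qed.

Lemma path_sum_w_mid : path_sum w_mid a b = 1.
Proof. by rewrite /path_sum /w_mid !in_set2 !eqxx h0a hna h0b hnb /= andbF add0r addr0. Qed.

Lemma path_sum_w_flow v : v != ord0 -> v != ord_max -> path_sum (w_flow v) a b = 0.
Proof.
move=> /negbTE v0 /negbTE vn.
rewrite /path_sum /w_flow !in_set2 !eqxx h0a hna h0b hnb v0 vn h0n /=.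
have [-> | _] := eqVneq v a.
  by case/and5P: ab => _ _ _ _ /negbTE ->; rewrite addrN add0r.
by case: (v == b); rewrite /= !add0r ?addNr.
Qed.

End PathSums.

End ThreeEdgePaths.

Section FreeEdges.

Variable n : nat.
Hypothesis n_ge3 : (2 < n)%N.

Let n_gt0 : (0 < n)%N. Proof. exact: ltn_trans n_ge3. Qed.

Definition v1 : 'I_n.+1 := inord 1.
Definition v2 : 'I_n.+1 := inord 2.

Lemma v12_neq :
  [/\ ord0 != v1, ord0 != v2, v1 != v2, v1 != ord_max & v2 != ord_max].
Proof.
rewrite /v1 /v2 -!(inj_eq val_inj) /= !inordK //; try lia.
by split; apply/eqP; lia.
Qed.

Definition free_edge (S : {set 'I_n.+1}) :=
  [&& ord_max \notin S, ~~ ((ord0 \in S) && (v1 \in S)) & ~~ ((v1 \in S) && (v2 \in S))].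

Definition free_edges : {set edge n} := [set e | free_edge (val e)].

Section DeterminedByFreeEdges.

Variables (R : realFieldType) (z : {ffun edge n -> R^o}).
Hypotheses (z_0n : pairing (@w_0n R n) z = 0) (z_at0 : pairing (@w_at0 R n) z = 0)
           (z_mid : pairing (@w_mid R n) z = 0)
           (z_flow : forall v, v != ord0 -> v != ord_max -> pairing (@w_flow R n v) z = 0)
           (z_free : {in free_edges, forall e, z e = 0}).

Let h0n := ord0_neq_max n_gt0.
Implicit Types (e f : edge n).

Lemma z_edge_0n e : ord0 \in val e -> ord_max \in val e -> z e = 0.
Proof.
move=> e0 en; apply: (pairing_eq0_coord z_0n); last by rewrite /w_0n e0 en oner_eq0.
move=> f fe; rewrite /w_0n; case: (boolP (_ && _)) => [/andP[f0 fn]|_]; last by rewrite mul0r.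
by case/eqP: fe; apply: (edge_eq h0n).
Qed.

Lemma z_edge_12 e : v1 \in val e -> v2 \in val e -> z e = 0.
Proof.
have [h01 h02 h12 h1n h2n] := v12_neq.
move=> e1 e2; apply: (pairing_eq0_coord z_mid).
  move=> f fe; rewrite /w_mid; case: (boolP (_ && _)) => [/andP[f0 fn]|_]; last by rewrite mul0r.
  case: (boolP ((v1 \in val f) && (v2 \in val f))) => [/andP[f1 f2]|f12].
    by case/eqP: fe; apply: (edge_eq h12).
  by rewrite z_free ?mulr0 // inE /free_edge fn f12 (negbTE f0).
rewrite /w_mid (edgeE h12 e1 e2) !in_set2.
by rewrite (negbTE h01) (negbTE h02) !(eq_sym ord_max) (negbTE h1n) (negbTE h2n) oner_eq0.
Qed.

Lemma z_edge_01 e : ord0 \in val e -> v1 \in val e -> z e = 0.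
Proof.
have [h01 _ _ _ _] := v12_neq.
move=> e0 e1; apply: (pairing_eq0_coord z_at0); last by rewrite /w_at0 e0 oner_eq0.
move=> f fe; rewrite /w_at0; case: (boolP (ord0 \in val f)) => [f0|_]; last by rewrite mul0r.
case: (boolP (ord_max \in val f)) => [fn|fn]; first by rewrite z_edge_0n ?mulr0.
case: (boolP (v1 \in val f)) => [f1|f1]; first by case/eqP: fe; apply: (edge_eq h01).
by rewrite z_free ?mulr0 // inE /free_edge fn f0 (negbTE f1).
Qed.

Lemma z_edge_notn e : ord_max \notin val e -> z e = 0.
Proof.
move=> en; case: (boolP ((ord0 \in val e) && (v1 \in val e))) => [/andP[]|e01].
  exact: z_edge_01.
case: (boolP ((v1 \in val e) && (v2 \in val e))) => [/andP[]|e12]; first exact: z_edge_12.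
by apply: z_free; rewrite inE /free_edge en e01 e12.
Qed.

Lemma z_edge_vn v e : v != ord0 -> v != ord_max -> v \in val e -> ord_max \in val e -> z e = 0.
Proof.
move=> v0 vn ev en; apply: (pairing_eq0_coord (z_flow v0 vn)).
  move=> f fe; rewrite /w_flow; case: (boolP (v \in val f)) => [fv|_]; last by rewrite mul0r.
  case: (boolP (ord_max \in val f)) => [fn|fn]; first by case/eqP: fe; apply: (edge_eq vn).
  by rewrite z_edge_notn ?mulr0.
by rewrite /w_flow ev en orbT oner_eq0.
Qed.

Lemma free_coords_eq0 e : z e = 0.
Proof.
case: (boolP (ord_max \in val e)) => [en|]; last exact: z_edge_notn.
have [v nv e_vn] := edge_other en.
have ev : v \in val e by rewrite e_vn set22.
have [v0|v0] := eqVneq v ord0; first by apply: z_edge_0n; rewrite // -v0.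
by apply: (z_edge_vn v0); rewrite // eq_sym.
Qed.

End DeterminedByFreeEdges.

Lemma polytope_aff_indep_leq (R : realFieldType) k (y : 'I_k -> {ffun edge n -> R^o}) :
  (forall i, @path_polytope R n 3 (complete_graph n) (y i)) -> aff_indep y ->
  (k <= #|free_edges|.+1)%N.
Proof.
move=> Py; apply: aff_indep_leq => c sum0 free0; apply/ffunP => e; rewrite ffunE.
have comb0 w kappa : (forall a b, inner_pair a b -> path_sum w a b = kappa) ->
    pairing w (\sum_i c i *: y i) = 0.
  by move=> wk; apply: (pairing_aff_comb (kappa := kappa)) => // i; exact: pairing_polytope (Py i).
apply: free_coords_eq0 => [||| v v0 vn |] //; apply: comb0 => a b ab.
- exact: path_sum_w_0n.
- exact: path_sum_w_at0.
- exact: path_sum_w_mid.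
- exact: path_sum_w_flow.
Qed.

Definition other_end (e : edge n) x := odflt x [pick y in val e :\ x].

Lemma other_endE (e : edge n) x :
  x \in val e -> x != other_end e x /\ val e = [set x; other_end e x].
Proof.
move=> xe; have [y xy e_xy] := edge_other xe.
suff -> : other_end e x = y by [].
rewrite /other_end e_xy setU1K ?in_set1 //.
by case: pickP => [z /set1P ->|/(_ y)]; rewrite ?set11.
Qed.

Definition some_end (e : edge n) := odflt ord0 [pick x in val e].

Lemma some_end_mem (e : edge n) : some_end e \in val e.
Proof.
rewrite /some_end; case: pickP => //= /eq_card0.
by rewrite edge_card.
Qed.

Definition free_pair (f : edge n) : 'I_n.+1 * 'I_n.+1 :=
  if ord0 \in val f then (other_end f ord0, v1)
  else let a := if v1 \in val f then v1 else some_end f in (a, other_end f a).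

Lemma free_pairP f : f \in free_edges ->
  exists a b, [/\ free_pair f = (a, b), inner_pair a b &
    if ord0 \in val f then val f = [set ord0; a] /\ b = v1
    else val f = [set a; b] /\ (v1 \in val f -> a = v1)].
Proof.
have [h01 _ _ h1n _] := v12_neq.
rewrite inE => /and3P[fn f01 _]; rewrite /free_pair.
have not_max x : x \in val f -> x != ord_max by apply: contraTneq => ->.
case: ifPn => [f0|f0].
  have [ab fE] := other_endE f0; exists (other_end f ord0), v1; split=> //.
  have fa : other_end f ord0 \in val f by rewrite fE set22.
  rewrite /inner_pair eq_sym ab not_max // eq_sym h01 h1n /=.
  by apply: contraNneq f01 => <-; rewrite f0.
set a := if v1 \in val f then v1 else some_end f.
have fa : a \in val f by rewrite /a; case: ifP => // _; exact: some_end_mem.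
have [ab fE] := other_endE fa; exists a, (other_end f a); split=> //.
  have fb : other_end f a \in val f by rewrite fE set22.
  have not0 x : x \in val f -> x != ord0 by apply: contraTneq => ->.
  by rewrite /inner_pair !not0 ?not_max.
by split=> // f1; rewrite /a f1.
Qed.

Definition free_rank (S : {set 'I_n.+1}) : nat :=
  if ord0 \in S then 1 else if v1 \in S then 2 else 0.

Section FreePaths.

Variable R : realFieldType.

Definition free_pv (f : edge n) := pv R (free_pair f).1 (free_pair f).2.

Lemma free_pv_in_polytope f :
  f \in free_edges -> @path_polytope R n 3 (complete_graph n) (free_pv f).
Proof. by case/free_pairP=> a [b [fab ab _]]; rewrite /free_pv fab; exact: pv_in_polytope. Qed.

Lemma free_pv_diag : {in free_edges, forall f, free_pv f f != 0}.
Proof.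
move=> f /free_pairP[a [b [fab _]]]; rewrite /free_pv fab pv_neq0.
by case: ifP => _ [-> _]; rewrite eqxx ?orbT.
Qed.

Lemma pv12_free_eq0 : {in free_edges, forall g, pv R v1 v2 g = 0}.
Proof.
move=> g; rewrite inE => /and3P[gn g01 g12]; apply/eqP; rewrite -[_ == 0]negbK pv_neq0.
by apply/negP => /or3P[] /eqP gE; move: gn g01 g12; rewrite gE !inE !eqxx ?orbT.
Qed.

Lemma free_pv_unitriangular :
  {in free_edges &, forall f g, f != g -> free_pv f g != 0 ->
     (free_rank (val f) < free_rank (val g))%N}.
Proof.
have [h01 _ _ _ _] := v12_neq.
move=> f g /free_pairP[a [b [fab ab f_ab]]] gF fg; have := gF.
rewrite inE /free_pv fab /= pv_neq0 => /and3P[gn g01 _] /or3P[] /eqP gE.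
- case: ifP f_ab => f0 [fE a1]; first by case/negP: fg; apply/eqP/val_inj; rewrite fE gE.
  rewrite /free_rank gE set21 f0; case: ifP => // f1.
  by move: g01; rewrite gE set21 (a1 f1) set22.
- case: ifP f_ab => f0 [fE b1]; last by case/negP: fg; apply/eqP/val_inj; rewrite fE gE.
  case/and5P: ab => a0 _ _ _ _.
  by rewrite /free_rank f0 gE b1 !in_set2 (eq_sym ord0 a) (negbTE a0) (negbTE h01) eqxx orbT.
- by move: gn; rewrite gE set22.
Qed.

Lemma polytope_aff_indep_ex : exists y : 'I_#|free_edges|.+1 -> {ffun edge n -> R^o},
  (forall i, @path_polytope R n 3 (complete_graph n) (y i)) /\ aff_indep y.
Proof.
have [h01 h02 h12 h1n h2n] := v12_neq.
exists (pts_cons (pv R v1 v2) (fun j => free_pv (enum_val j))); split.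
  move=> i; rewrite /pts_cons; case: unlift => [j|].
    exact/free_pv_in_polytope/enum_valP.
  by apply: pv_in_polytope; rewrite // /inner_pair !(eq_sym _ ord0) h01 h02 h12 h1n h2n.
apply: aff_indep_unitriangular (fun g => free_rank (val g)) _ _ _.
- exact: pv12_free_eq0.
- exact: free_pv_diag.
- exact: free_pv_unitriangular.
Qed.

End FreePaths.

Lemma card_complete_graph : #|complete_graph n| = (#|free_edges| + 2 + n)%N.
Proof.
have [h01 h02 h12 h1n h2n] := v12_neq.
set N := [set e : edge n | ord_max \in val e].
rewrite /complete_graph cardsT -(cardsC N) card_edges_at_max -(cardsID free_edges (~: N)).
have -> : ~: N :&: free_edges = free_edges.
  by apply/setIidPr/subsetP => e; rewrite !inE => /and3P[].
have -> : ~: N :\: free_edges = [set edge_of h01; edge_of h12].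
  apply/setP => e; rewrite !inE /free_edge; apply/idP/idP => [/andP[nfree en]|].
  - move: nfree; rewrite en /= negb_and !negbK.
    case/orP=> /andP[e0 e1].
      by apply/orP; left; apply/eqP/(edge_eq h01); rewrite ?set21 ?set22.
    by apply/orP; right; apply/eqP/(edge_eq h12); rewrite ?set21 ?set22.
  - case/orP=> /eqP-> /=; rewrite !in_set2 !eqxx !(eq_sym ord_max);
    rewrite ?(negbTE (ord0_neq_max n_gt0)) (negbTE h1n) ?(negbTE h2n) ?orbT ?andbF //.
have e01_12 : edge_of h01 != edge_of h12.
  apply/negP => /eqP/(congr1 val) /= e01E.
  by move: (set21 ord0 v1); rewrite e01E in_set2 (negbTE h01) (negbTE h02).
by rewrite cards2 e01_12 addnC.
Qed.

End FreeEdges.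

Theorem mainTheorem15 (R : realFieldType) (n : nat) (hn : (3 <= n)%N) :
  has_dim (@path_polytope R n 3 (complete_graph n))
          (#|complete_graph n| - n - 2)%N.
Proof.
rewrite card_complete_graph // !addnK.
split; first exact: polytope_aff_indep_ex.
exact: polytope_aff_indep_leq.
Qed.
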